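(* Let $\xi$ be a positive random variable with $\mathbb{E}(\xi^\eta)=\infty$ for some $\eta<1$. Then for every $p\in[0,1)$, $$\mathbb{P}^\Lambda_p(o\leftrightarrow\infty)=0\quad\text{for }\upsilon_\xi\text{-almost every environment }\Lambda.$$
   Context: Let $\xi$ be a positive random variable and let $\xi_1,\xi_2,\dots$ be i.i.d. copies of $\xi$. Set $x_0=0$ and $x_k=x_{k-1}+\xi_k$ for $k\ge1$, and let $\Lambda=\{x_0,x_1,x_2,\dots\}\subseteq\mathbb{R}$ (the environment); $\upsilon_\xi$ denotes the law of $\Lambda$. Given $\Lambda$, let $\mathcal{L}_\Lambda$ be the graph with vertex set $\{(x_i,n): i\in\mathbb{Z}_+,\ n\in\mathbb{Z}_+\}\subseteq\mathbb{R}^2$ (with $\mathbb{Z}_+=\{0,1,2,\dots\}$) and edge set $\{\{(x_i,n),(x_j,m)\}: |i-j|+|n-m|=1\}$. For $p\in[0,1]$, $\mathbb{P}^\Lambda_p$ is the probability measure on $\{0,1\}^{E(\mathcal{L}_\Lambda)}$ under which the edges are independently open with probability $p_e=p^{|e|}$, where $|e|$ is the Euclidean length of $e$ (so vertical edges have length $1$, and horizontal edges between the $i$-th and $(i+1)$-th column have length $\xi_{i+1}$). Let $o=(0,0)$ and let $\{o\leftrightarrow\infty\}$ be the event that the open cluster of $o$ is infinite. *)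

From HB Require Import structures.
From mathcomp Require Import all_boot all_order all_algebra.
From mathcomp Require Import all_classical all_reals all_analysis.
Set Implicit Arguments. Unset Strict Implicit. Unset Printing Implicit Defensive.
Import Order.TTheory GRing.Theory Num.Theory.
Local Open Scope classical_set_scope.
Local Open Scope ring_scope.

(* The family (xi k)_{k} (xi k = \xi_{k+1} in the paper) is i.i.d. :
   measurable, identically distributed, mutually independent. *)
Definition iid_seq (R : realType) (d : measure_display) (Omega : measurableType d)
  (Q : probability Omega R) (xi : nat -> Omega -> R) : Prop :=
  [/\ (forall k, measurable_fun setT (xi k)),
      (forall k (B : set R), measurable B ->
         Q (xi k @^-1` B) = Q (xi 0%N @^-1` B)) &
      (forall (s : seq nat) (B : nat -> set R), uniq s ->
         (forall k, measurable (B k)) ->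
         Q [set w | forall k, k \in s -> B k (xi k w)] =
         (\prod_(k <- s) Q (xi k @^-1` B k))%E)].

(* Positions x_i = xi_1 + ... + xi_i of the columns, x_0 = 0. *)
Definition column (R : realType) (xs : nat -> R) (i : nat) : R :=
  \sum_(k < i) xs k.

(* Vertex (i, n) stands for the point (x_i, n).
   Edge (i, n, true)  : horizontal edge {(x_i,n),(x_{i+1},n)};
   Edge (i, n, false) : vertical edge   {(x_i,n),(x_i,n+1)}. *)
Definition vertex := (nat * nat)%type.
Definition edge := (nat * nat * bool)%type.

Definition edge_ends (e : edge) : vertex * vertex :=
  let: (i, n, h) := e in
  if h then ((i, n), (i.+1, n)) else ((i, n), (i, n.+1)).

Definition edge_len (R : realType) (xs : nat -> R) (e : edge) : R :=
  let: (i, n, h) := e in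
  if h then column xs i.+1 - column xs i else 1.

Inductive reach (w : edge -> bool) : vertex -> Prop :=
| reach_o : reach w (0%N, 0%N)
| reach_step (u v : vertex) (e : edge) :
    reach w u -> w e ->
    (edge_ends e = (u, v) \/ edge_ends e = (v, u)) -> reach w v.

Definition perc_event (T : Type) (omega : edge -> T -> bool) : set T :=
  [set t | ~ finite_set (reach (fun e => omega e t))].

(* omega is a family of independent Bernoulli edge variables with
   P(edge e open) = pe e (this determines the law P^Lambda_p). *)
Definition bernoulli_edges (R : realType) (d : measure_display) (T : measurableType d)
  (P : probability T R) (pe : edge -> R) (omega : edge -> T -> bool) : Prop :=
  (forall e, measurable [set t | omega e t]) /\
  (forall (F : seq edge) (b : edge -> bool), uniq F ->
     P [set t | forall e, e \in F -> omega e t = b e] =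
     (\prod_(e <- F) (if b e then pe e else 1 - pe e))%:E).

From HB Require Import structures.
From mathcomp Require Import all_boot all_order all_algebra.
From mathcomp Require Import all_classical all_reals all_analysis.
From mathcomp Require Import ring lra measurable_realfun.
Import Order.TTheory GRing.Theory Num.Theory.
Local Open Scope classical_set_scope.
Local Open Scope ring_scope.
Set Implicit Arguments. Unset Strict Implicit. Unset Printing Implicit Defensive.

(* An infinite open cluster of [o] either leaves the columns [0..i] through
   one of the horizontal edges of length [x_i] below height [N], or climbs
   to height [N] inside these columns, using at every level one of the
   [i + 1] vertical edges there.  Hence
     P(o <-> oo) <= N p^(x_i) + (1 - (1 - p)^(i+1))^N.
   With [u = (1 - p)^(i+1)], a gap [x_i >= 2 (i+1) ln(1-p) / ln p] makes the
   first term at most [N u^2], and [N] of order [1/u] makes the bound small.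
   Such gaps occur infinitely often almost surely: [E xi^eta = oo] with
   [eta <= 1] forces [sum_n P(xi >= c (n+1)) = oo] for every [c > 0], and
   the second Borel-Cantelli lemma applies to the independent [xi_i]. *)

Lemma le_measure_fincover d (T : measurableType d) (R : realType)
    (mu : {measure set T -> \bar R}) (I : finType) (A : set T) (F : I -> set T) :
  measurable A -> (forall x, measurable (F x)) -> A `<=` \bigcup_x F x ->
  (mu A <= \sum_(x : I) mu (F x))%E.
Proof.
move=> mA mF AF.
have -> : (\sum_(x : I) mu (F x) = \sum_(x \in [set: I]) mu (F x))%E.
  rewrite (fsbigE (enum I)) ?enum_uniq //; last by move=> x _; rewrite mem_enum.
  by under [RHS]eq_bigl do rewrite in_setT; rewrite big_enum.
by apply: content_sub_fsum => //; exact: finite_finset.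
Qed.

Lemma prod_iota_first_success (R : pzRingType) (p : R) k :
  \prod_(j <- iota 0 k.+1) (if j == k then p else 1 - p) = (1 - p) ^+ k * p.
Proof.
rewrite -addn1 iotaD big_cat /= big_seq1 add0n eqxx; congr (_ * _).
rewrite (eq_big_seq (fun _ => 1 - p)) ?big_const_seq ?count_predT ?size_iota;
  first by rewrite -Monoid.iteropE.
by move=> j; rewrite mem_iota add0n /= => /ltn_eqF ->.
Qed.

Lemma sum_first_success (R : comPzRingType) (p : R) k :
  \sum_(j < k) (1 - p) ^+ j * p = 1 - (1 - p) ^+ k.
Proof.
elim: k => [|k IH]; first by rewrite big_ord0 expr0 subrr.
by rewrite big_ord_recr /= IH exprSr; ring.
Qed.

Lemma prod1B_mul1D_sum_le1 (R : realFieldType) (I : Type) (l : seq I) (f : I -> R) :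
  (forall i, 0 <= f i <= 1) ->
  (\prod_(i <- l) (1 - f i)) * (1 + \sum_(i <- l) f i) <= 1.
Proof.
move=> f01; elim: l => [|a l IH]; first by rewrite !big_nil addr0 mulr1.
rewrite !big_cons; move: IH (f01 a).
have P01 : 0 <= \prod_(i <- l) (1 - f i) <= 1.
  by rewrite prodr_ge0 ?prodr_ile1 // => i _; have := f01 i; lra.
have S0 : 0 <= \sum_(i <- l) f i by apply: sumr_ge0 => i _; have := f01 i; lra.
move: P01 S0; set Pr := \prod_(i <- l) _; set S := \sum_(i <- l) _; set y := f a.
move=> /andP[P0 P1] S0 IH /andP[y0 y1].
have : 0 <= (1 - y) * (1 - Pr * (1 + S)) by apply: mulr_ge0; lra.
have : 0 <= (1 - y) * y * (1 - Pr) by rewrite !mulr_ge0 //; lra.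
nra.
Qed.

Definition incident (v : vertex) : seq (edge * vertex) :=
  let: (a, b) := v in
  [:: ((a, b, true), (a.+1, b)); ((a, b, false), (a, b.+1))] ++
  (if a is a'.+1 then [:: ((a', b, true), (a', b))] else [::]) ++
  (if b is b'.+1 then [:: ((a, b', false), (a, b'))] else [::]).

Lemma mem_incident e u v :
  (e, u) \in incident v <-> edge_ends e = (u, v) \/ edge_ends e = (v, u).
Proof.
split.
  case: v => [[|a] [|b]]; rewrite /incident /= !inE;
  by repeat case/orP; move/eqP=> [-> ->]; (by left) || (by right).
case: e => [[i n] []] /=;
by case=> -[<- <-]; rewrite /incident !mem_cat !inE ?eqxx //= ?orbT.
Qed.

Fixpoint reach_within (w : edge -> bool) (n : nat) (v : vertex) : bool :=
  if n is n'.+1 then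
    reach_within w n' v ||
    has (fun eu => w eu.1 && reach_within w n' eu.2) (incident v)
  else v == (0, 0)%N.

Lemma reachP w v : reach w v <-> exists n, reach_within w n v.
Proof.
split.
  elim=> [|u {}v e _ [n reach_u] we uv]; first by exists 0%N.
  exists n.+1 => /=; apply/orP; right; apply/hasP.
  by exists (e, u); [exact/mem_incident | rewrite /= we reach_u].
case=> n; elim: n v => [|n IH] v /=; first by move/eqP ->; exact: reach_o.
case/orP; first exact: IH.
case/hasP=> -[e u] /mem_incident uv /andP[/= we /IH reach_u].
exact: reach_step reach_u we uv.
Qed.

Lemma infinite_verticesP (A : set vertex) :
  ~ finite_set A <-> forall M, exists v, A v /\ (M <= v.1 + v.2)%N.
Proof.
split=> [Ainf M | far /finite_fsetP[F AF]].
  apply: contrapT => near; apply: Ainf.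
  apply: (@sub_finite_set _ _ (`I_M `*` `I_M)); last exact/finite_setX/finite_II.
  move=> [a b] Av; have abM : (a + b < M)%N.
    by rewrite ltnNge; apply/negP => Mab; apply: near; exists (a, b).
  by split; apply: leq_ltn_trans abM; rewrite ?leq_addr ?leq_addl.
have [v []] := far (\max_(x <- finmap.enum_fset F) (x.1 + x.2)).+1.
by rewrite AF /= => vF; rewrite ltnNge (leq_bigmax_seq v vF).
Qed.

(* An open path from [o] that stays in the columns [0..i] uses, at each level
   it climbs past, an open vertical edge of one of these columns. *)
Definition climbable (i N : nat) (w : edge -> bool) :=
  forall m, (m < N)%N -> exists2 j, (j <= i)%N & w (j, m, false).

Lemma climbable_le i M N w : (M <= N)%N -> climbable i N w -> climbable i M w.
Proof. by move=> MN cl m mM; apply/cl/leq_trans/MN. Qed.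

Lemma reach_strip_or_exit i w v : reach w v ->
  ((v.1 <= i)%N /\ climbable i v.2 w) \/
  (exists n, w (i, n, true) /\ climbable i n w).
Proof.
elim=> [|u {}v [[j n] []] _ IH we uv]; first by left; split => // m.
all: case: IH => [[ui cl]|]; [|by right].
- case: uv => -[? ?]; subst u v; last by left; split => //; exact: ltnW.
  rewrite leq_eqVlt in ui; case/orP: ui => [ji|ji]; last by left.
  by right; exists n; move/eqP: ji cl => /= <-.
- case: uv => -[? ?]; subst u v; last by left; split => //; exact: climbable_le cl.
  left; split => // m; rewrite ltnS leq_eqVlt => /orP[/eqP->|]; last exact: cl.
  by exists j.
Qed.

Lemma perc_exit_or_climb i N w : ~ finite_set (reach w) ->
  (exists2 n, (n < N)%N & w (i, n, true)) \/ climbable i N w.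
Proof.
move=> /infinite_verticesP far.
have [[n [wn cl]]|no_exit] :=
  pselect (exists n, w (i, n, true) /\ climbable i n w).
  by case: (ltnP n N) => nN; [left; exists n | right; exact: climbable_le cl].
right; have [v [reach_v far_v]] := far (i + N)%N.
case: (reach_strip_or_exit i reach_v) => [[vi cl]|//].
apply: climbable_le cl; rewrite -(leq_add2l i); apply: leq_trans far_v _.
by rewrite leq_add2r.
Qed.

Section bernoulli_edges.
Variables (R : realType) (dT : measure_display) (T : measurableType dT).
Variables (P : probability T R) (pe : edge -> R) (omega : edge -> T -> bool).
Hypothesis omegaP : bernoulli_edges P pe omega.

Lemma measurable_edge_open e : measurable [set t | omega e t].
Proof. by case: omegaP. Qed.

Lemma measurable_orb (a b : T -> bool) :
  measurable [set t | a t] -> measurable [set t | b t] ->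
  measurable [set t | a t || b t].
Proof.
move=> ma mb; rewrite (_ : [set t | _] = [set t | a t] `|` [set t | b t]).
  exact: measurableU.
by apply/seteqP; split => t /=; [move/orP|move=> ?; apply/orP].
Qed.

Lemma measurable_andb (a b : T -> bool) :
  measurable [set t | a t] -> measurable [set t | b t] ->
  measurable [set t | a t && b t].
Proof.
move=> ma mb; rewrite (_ : [set t | _] = [set t | a t] `&` [set t | b t]).
  exact: measurableI.
by apply/seteqP; split => t /=; [move/andP|move=> ?; apply/andP].
Qed.

Lemma measurable_const_bool (b : bool) : measurable [set _ : T | b].
Proof.
case: b; [rewrite (_ : [set _ | _] = setT) | rewrite (_ : [set _ | _] = set0)];
by rewrite ?predeqE.
Qed.

Lemma measurable_reach_within n v :
  measurable [set t | reach_within (fun e => omega e t) n v].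
Proof.
elim: n v => [|n IH] v /=; first exact: measurable_const_bool.
apply: measurable_orb => //; elim: (incident v) => [|[e u] l IHl] /=.
  exact: measurable_const_bool.
by apply: measurable_orb => //; apply: measurable_andb => //;
  exact: measurable_edge_open.
Qed.

Lemma measurable_perc_event : measurable (perc_event omega).
Proof.
rewrite (_ : perc_event omega = \bigcap_M \bigcup_k \bigcup_a \bigcup_b
   [set t | (M <= a + b)%N && reach_within (fun e => omega e t) k (a, b)]).
  apply: bigcapT_measurable => M; do 3 apply: bigcupT_measurable => ?.
  by apply: measurable_andb; [exact: measurable_const_bool|exact: measurable_reach_within].
apply/seteqP; split => t /=.
  move/infinite_verticesP => far M _; have [[a b] [/reachP[k reach_ab] Mab]] := far M.
  by exists k => //; exists a => //; exists b => //=; rewrite Mab reach_ab.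
move=> far; apply/infinite_verticesP => M.
have [k _ [a _ [b _ /andP[Mab reach_ab]]]] := far M I.
by exists (a, b); split => //; apply/reachP; exists k.
Qed.

Lemma measurable_edge_pattern (F : seq edge) (b : edge -> bool) :
  measurable [set t | forall e, e \in F -> omega e t = b e].
Proof.
rewrite (_ : [set t | _] = [set t | all (fun e => omega e t == b e) F]); last first.
  by apply/seteqP; split => t /= h; [apply/allP => e /h ->|move=> e /(allP h)/eqP].
elim: F => [|e F IH] /=; first exact: measurable_const_bool.
apply: measurable_andb => //; case: (b e).
  rewrite (_ : [set t | _] = [set t | omega e t]); first exact: measurable_edge_open.
  by apply/seteqP; split => t /=; rewrite eqb_id.
rewrite (_ : [set t | _] = ~` [set t | omega e t]); first exact/measurableC/measurable_edge_open.
by apply/seteqP; split => t /=; rewrite eqbF_neg => /negP.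
Qed.

Lemma edge_open_prob e : P [set t | omega e t] = (pe e)%:E.
Proof.
have := omegaP.2 [:: e] (fun _ => true) erefl; rewrite big_seq1 => <-.
by congr (P _); apply/seteqP; split => t /= h; [move=> e'; rewrite inE => /eqP->|
  apply: h; rewrite inE].
Qed.

Section first_open.
Variables (N i : nat) (p : R).
Hypothesis vertical_prob : forall j m, pe (j, m, false) = p.
Implicit Type f : {ffun 'I_N -> 'I_i.+1}.

(* For each level [m < N] the first open vertical edge among the columns
   [0..i] is the one in column [f m]. *)
Definition first_open_edges f : seq edge :=
  [seq ((j : nat), nat_of_ord m, false) | m <- enum 'I_N, j <- iota 0 (f m).+1].

Definition first_open_pattern f (e : edge) : bool :=
  if insub e.1.2 : option 'I_N is Some m then e.1.1 == f m else false.

Definition first_open_event f : set T :=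
  [set t | forall e, e \in first_open_edges f -> omega e t = first_open_pattern f e].

Lemma first_open_edges_uniq f : uniq (first_open_edges f).
Proof.
apply: allpairs_uniq_dep => [|m _|[m j] [m' j'] _ _ /= [-> /val_inj ->]].
- exact: enum_uniq.
- exact: iota_uniq.
- by [].
Qed.

Lemma first_open_event_prob f :
  P (first_open_event f) = (\prod_(m : 'I_N) ((1 - p) ^+ f m * p))%:E.
Proof.
rewrite /first_open_event (omegaP.2 _ _ (first_open_edges_uniq f)) big_allpairs_dep.
rewrite big_enum; congr (_%:E); apply: eq_bigr => m _.
rewrite -prod_iota_first_success; apply: eq_bigr => j _.
by rewrite /first_open_pattern /= valK vertical_prob.
Qed.

Lemma climbable_first_open t :
  climbable i N (fun e => omega e t) -> exists f, first_open_event f t.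
Proof.
move=> cl.
have /fin_all_exists[f fP] : forall m : 'I_N, exists j : 'I_i.+1,
    omega (nat_of_ord j, nat_of_ord m, false) t /\
    forall k, (k < j)%N -> ~~ omega (k, nat_of_ord m, false) t.
  move=> m; have [j0 j0i open_j0] := cl m (ltn_ord m).
  case: (ex_minnP (ex_intro (fun j => omega (j, nat_of_ord m, false) t) j0 open_j0)).
  move=> j open_j jmin; have ji : (j < i.+1)%N by apply: leq_ltn_trans (jmin _ open_j0) _.
  exists (Ordinal ji); split => // k kj; apply/negP => /jmin.
  by rewrite leqNgt kj.
exists [ffun m => f m] => e /allpairsPdep[m [j [_ + ->]]].
rewrite mem_iota add0n ltnS /first_open_pattern /= valK !ffunE => jm.
have [->|jfm] := eqVneq j (f m); first by case: (fP m).
have jlt : (j < f m)%N by rewrite ltn_neqAle jfm.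
by apply/negbTE; case: (fP m) => _; apply.
Qed.

End first_open.

Lemma perc_event_prob_le (N i : nat) (p ph : R) :
    (forall j m, pe (j, m, false) = p) -> (forall n, pe (i, n, true) = ph) ->
  (P (perc_event omega) <= (N%:R * ph + (1 - (1 - p) ^+ i.+1) ^+ N)%:E)%E.
Proof.
move=> vertical_prob horizontal_prob.
pose F (x : 'I_N + {ffun 'I_N -> 'I_i.+1}) : set T :=
  match x with
  | inl n => [set t | omega (i, nat_of_ord n, true) t]
  | inr f => first_open_event f
  end.
apply: le_trans (le_measure_fincover P (F := F) measurable_perc_event _ _) _.
- by case=> [n|f]; [exact: measurable_edge_open|exact: measurable_edge_pattern].
- move=> t /= /(perc_exit_or_climb i N) [[n nN open_n]|].
    by exists (inl (Ordinal nN)).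
  by move/(climbable_first_open (N := N)) => [f ?]; exists (inr f).
rewrite big_sumType /= EFinD; apply: leeD.
  under eq_bigr do rewrite edge_open_prob horizontal_prob.
  by rewrite sumEFin sumr_const card_ord mulr_natl.
under eq_bigr do rewrite (first_open_event_prob vertical_prob).
rewrite sumEFin -(bigA_distr_bigA (fun (m : 'I_N) (j : 'I_i.+1) => (1 - p) ^+ j * p)).
by rewrite prodr_const card_ord sum_first_success.
Qed.

End bernoulli_edges.

Lemma crossing_bound_small (R : archiRealFieldType) (eps : R) : 0 < eps ->
  exists2 delta, 0 < delta & forall u, 0 < u <= delta ->
    exists N, N%:R * u ^+ 2 + (1 - u) ^+ N <= eps.
Proof.
move=> eps0; have inv_eps0 : 0 <= 2 / eps by rewrite divr_ge0 ?ltW.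
set K := Num.bound (2 / eps + eps).
have epsK : 2 / eps + eps < K%:R by rewrite archi_boundP // addr_ge0 // ltW.
have K10 : 0 < K%:R + 1 :> R by rewrite ltr_wpDl.
exists (eps / 2 / (K%:R + 1)); first by rewrite !divr_gt0.
set delta := _ / _ => u /andP[u0 udelta].
have Kdelta : delta * (K%:R + 1) = eps / 2 by rewrite divfK ?gt_eqF.
have u1 : u <= 1 by nra.
exists (Num.truncn (K%:R / u)).+1; set N := (Num.truncn _).+1.
have KNu : K%:R < N%:R * u by rewrite -ltr_pdivrMr // truncnS_gt.
have NuK : N%:R * u <= K%:R + 1.
  have : N%:R <= K%:R / u + 1 by rewrite -natr1 lerD2r truncn_le divr_ge0 ?ltW.
  by move/(ler_wpM2r (ltW u0)); rewrite mulrDl divfK ?gt_eqF // mul1r; lra.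
have geo : (1 - u) ^+ N * (1 + N%:R * u) <= 1.
  have u01 : 0 <= u <= 1 by rewrite ltW.
  have := @prod1B_mul1D_sum_le1 _ _ (index_iota 0 N) (fun _ => u) (fun=> u01).
  by rewrite prodr_const_nat sumr_const_nat subn0 mulr_natl.
have Nu2 : N%:R * u ^+ 2 <= eps / 2 by nra.
move: geo; set X := (1 - u) ^+ N => geo.
have X0 : 0 <= X by rewrite exprn_ge0 //; lra.
have : X * (2 / eps) <= 1 by nra.
rewrite -ler_pdivlMr ?divr_gt0 // invf_div; lra.
Qed.

Lemma edge_len_horizontal (R : realType) (xs : nat -> R) i n :
  edge_len xs (i, n, true) = xs i.
Proof. by rewrite /= /column big_ord_recr /= addrAC subrr add0r. Qed.

Definition long_edge_ratio (R : realType) (p : R) : R := 2 * ln (1 - p) / ln p.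

Lemma powR_long_edge_ratio (R : realType) (p : R) n : 0 < p < 1 ->
  p `^ (long_edge_ratio p * n%:R) = ((1 - p) ^+ n) ^+ 2.
Proof.
case/andP=> p0 p1; have q0 : 0 < 1 - p by rewrite subr_gt0.
have ratio : p `^ long_edge_ratio p = (1 - p) ^+ 2.
  rewrite /powR gt_eqF // /long_edge_ratio divfK; last by rewrite lt_eqF // ln_lt0 ?p0.
  by rewrite -powR_mulrn ?ltW // /powR gt_eqF.
by rewrite powRrM ratio powR_mulrn ?exprn_ge0 ?ltW // exprAC.
Qed.

Lemma long_edge_ratio_gt0 (R : realType) (p : R) : 0 < p < 1 -> 0 < long_edge_ratio p.
Proof.
case/andP=> p0 p1; have lnq : ln (1 - p) < 0 by rewrite ln_lt0 // subr_gt0 p1; lra.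
have lnp : ln p < 0 by rewrite ln_lt0 ?p0.
by rewrite /long_edge_ratio -mulrNN -invrN mulr_gt0 ?invr_gt0 ?oppr_gt0 // pmulr_rlt0.
Qed.

Section deterministic_environment.
Variables (R : realType) (xs : nat -> R) (p : R).
Variables (dT : measure_display) (T : measurableType dT) (P : probability T R).
Variable (omega : edge -> T -> bool).
Hypothesis omegaP : bernoulli_edges P (fun e => p `^ edge_len xs e) omega.

Let perc_le N i : 0 <= p ->
  (P (perc_event omega) <= (N%:R * p `^ xs i + (1 - (1 - p) ^+ i.+1) ^+ N)%:E)%E.
Proof.
move=> p0; apply: (perc_event_prob_le omegaP) => [j m|n].
  exact: powRr1.
by rewrite edge_len_horizontal.
Qed.

Lemma perc_prob0_p0 : p = 0 -> (forall k, 0 < xs k) -> P (perc_event omega) = 0%E.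
Proof.
move=> p_eq0 xs0; apply/eqP; rewrite eq_le measure_ge0 andbT.
have p0 : 0 <= p by rewrite p_eq0.
have := perc_le 1 0 p0.
by rewrite p_eq0 powR0 ?gt_eqF // subr0 !expr1 subrr mulr0 add0r.
Qed.

Lemma perc_prob0_long_edges : 0 < p < 1 ->
    (forall k, exists2 i, (k <= i)%N & long_edge_ratio p * i.+1%:R <= xs i) ->
  P (perc_event omega) = 0%E.
Proof.
move=> /[dup] /andP[p0 p1] p01 long_edges.
apply/eqP; rewrite eq_le measure_ge0 andbT; apply/lee_addgt0Pr => eps eps0.
rewrite add0e; have [delta delta0 small] := crossing_bound_small eps0.
have : (GRing.exp (1 - p) : R^nat) @ \oo --> 0.
  by apply: cvg_expr; rewrite ger0_norm; lra.
move/cvgr0_norm_le/(_ _ delta0) => [i0 _ geo_small].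
have [i i0i long_i] := long_edges i0; set u := (1 - p) ^+ i.+1.
have u0 : 0 < u by rewrite exprn_gt0 // subr_gt0.
have udelta : u <= delta.
  by have := geo_small i.+1 (leqW i0i); rewrite ger0_norm // ltW.
have [|N crossing_small] := small u; first by rewrite u0.
apply: le_trans (perc_le N i (ltW p0)) _; rewrite lee_fin -/u.
have long_i_small : p `^ xs i <= u ^+ 2.
  rewrite -powR_long_edge_ratio //; apply: ger_powR long_i.
  by rewrite p0 ltW.
apply: le_trans crossing_small; rewrite lerD2r ler_wpM2l //.
Qed.

End deterministic_environment.

Lemma nneseries_pinfty_unbounded (R : realType) (u : nat -> R) :
    (forall n, 0 <= u n) -> (\sum_(n <oo) (u n)%:E = +oo)%E ->
  forall M, exists K, M < \sum_(n < K) u n.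
Proof.
move=> u0 u_oo M; apply: contrapT => bounded.
suff : (\sum_(n <oo) (u n)%:E <= M%:E)%E by rewrite u_oo leye_eq.
apply: lime_le; first by apply: is_cvg_nneseries => n _ _; rewrite lee_fin.
apply: nearW => K /=; rewrite sumEFin lee_fin big_mkord leNgt.
by apply/negP => MK; apply: bounded; exists K.
Qed.

Lemma powR_le1D (R : realType) (x eta : R) : 0 < x -> 0 <= eta <= 1 ->
  x `^ eta <= 1 + x.
Proof.
move=> x0 /andP[eta0 eta1]; have [x1|x1] := lerP x 1.
  apply: le_trans (ger_powR _ eta0) _; first by rewrite x0 x1.
  by rewrite powRr0 lerDl ltW.
by apply: le_trans (ler1_powR (ltW x1) eta1) _; rewrite lerDr.
Qed.

Section iid_sequence.
Variables (R : realType) (d : measure_display) (Omega : measurableType d).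
Variables (Q : probability Omega R) (xi : nat -> Omega -> R).
Hypothesis xi_iid : iid_seq Q xi.

Lemma measurable_xi_preimage k (B : set R) :
  measurable B -> measurable (xi k @^-1` B).
Proof.
by case: xi_iid => mxi _ _ mB; rewrite -[_ @^-1` _]setTI; exact: mxi.
Qed.

Section second_borel_cantelli.
Variable B : nat -> set R.
Hypothesis mB : forall n, measurable (B n).
Hypothesis B_oo : (\sum_(n <oo) Q (xi n @^-1` B n) = +oo)%E.

Let r n := fine (Q (xi n @^-1` B n)).

Let Q_B n : Q (xi n @^-1` B n) = (r n)%:E.
Proof. by rewrite fineK // fin_num_measure //; exact: measurable_xi_preimage. Qed.

Let r01 n : 0 <= r n <= 1.
Proof.
by rewrite -!lee_fin -Q_B measure_ge0 probability_le1 //; exact: measurable_xi_preimage.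
Qed.

Let avoid_from k := [set w | forall i, (k <= i)%N -> ~ B i (xi i w)].

Let measurable_avoid_from k : measurable (avoid_from k).
Proof.
rewrite (_ : avoid_from k = \bigcap_(i in [set i | (k <= i)%N]) (xi i @^-1` ~` B i)).
  by apply: bigcap_measurableType => i _; exact/measurable_xi_preimage/measurableC.
by apply/seteqP; split => w /= avoid i; exact: avoid.
Qed.

Let Q_avoid_window (s : seq nat) : uniq s ->
  Q [set w | forall i, i \in s -> (~` B i) (xi i w)] = (\prod_(i <- s) (1 - r i))%:E.
Proof.
case: xi_iid => _ _ indep s_uniq.
rewrite (indep _ (fun i => ~` B i)) // => [|i]; last exact: measurableC.
rewrite -prodEFin; apply: eq_bigr => i _.
by rewrite -preimage_setC probability_setC ?Q_B //; exact: measurable_xi_preimage.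
Qed.

Let Q_avoid_from k : Q (avoid_from k) = 0%E.
Proof.
apply/eqP; rewrite eq_le measure_ge0 andbT; apply/lee_addgt0Pr => eps eps0.
rewrite add0e; have r_oo : (\sum_(n <oo) (r n)%:E = +oo)%E.
  by rewrite -B_oo; apply: eq_eseriesr => n _; rewrite Q_B.
have [K rK] := nneseries_pinfty_unbounded (fun n => (andP (r01 n)).1) r_oo (eps^-1 + k%:R).
have sum_le_card n : \sum_(i < n) r i <= n%:R.
  by rewrite -[n in n%:R]card_ord -sumr_const ler_sum // => i _; case/andP: (r01 i).
have kK : (k <= K)%N.
  rewrite -(ler_nat R); apply: ltW; apply: lt_le_trans (sum_le_card K).
  by apply: le_lt_trans rK; rewrite lerDr invr_ge0 ltW.
set s := index_iota k K.
have eps_sum : eps^-1 < \sum_(i <- s) r i.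
  move: rK; rewrite -(big_mkord xpredT) (big_cat_nat (leq0n k) kK) /= big_mkord.
  by have := sum_le_card k; lra.
set window := [set w | forall i, i \in s -> (~` B i) (xi i w)].
have measurable_window : measurable window.
  rewrite (_ : window = \bigcap_(i in [set` s]) (xi i @^-1` ~` B i)) //.
  by apply: bigcap_measurableType => i _; exact/measurable_xi_preimage/measurableC.
have avoid_window : avoid_from k `<=` window.
  by move=> w avoid i; rewrite mem_index_iota => /andP[ki _]; exact: avoid.
suff : (Q window <= eps%:E)%E.
  by apply: le_trans; apply: le_measure avoid_window; rewrite inE.
rewrite Q_avoid_window ?iota_uniq // lee_fin.
have := prod1B_mul1D_sum_le1 s r01; move: eps_sum.
set Pr := \prod_(i <- s) _; set S := \sum_(i <- s) _ => eps_sum prod_sum.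
have Pr0 : 0 <= Pr by rewrite prodr_ge0 // => i _; case/andP: (r01 i); lra.
suff : Pr / eps <= 1 by rewrite ler_pdivrMr // mul1r.
nra.
Qed.

Lemma iid_infinitely_often :
  {ae Q, forall w, forall k, exists2 i, (k <= i)%N & B i (xi i w)}.
Proof.
have null k : Q.-negligible (avoid_from k).
  by apply/negligibleP; [exact: measurable_avoid_from | exact: Q_avoid_from].
apply: negligibleS (negligible_bigcup null).
move=> w /= not_io; apply: contrapT => not_avoid; apply: not_io => k.
apply: contrapT => no_B; apply: not_avoid; exists k => // i ki Bi.
by apply: no_B; exists i.
Qed.

End second_borel_cantelli.

Section heavy_tail.
Variables (c eta : R).
Hypotheses (c0 : 0 < c) (eta01 : 0 <= eta <= 1) (xi0_pos : forall w, 0 < xi 0 w).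

Let level n := xi 0 @^-1` `[c * n.+1%:R, +oo[%classic.

Let measurable_level n : measurable (level n).
Proof. exact: measurable_xi_preimage (measurable_itv _). Qed.

Let indic_level_ge0 n w : 0 <= c * \1_(level n) w.
Proof. by apply: mulr_ge0; [exact: ltW | rewrite indicE]. Qed.

Lemma powR_le_level_count w :
  ((xi 0 w `^ eta)%:E <= (1 + c)%:E + \sum_(n <oo) (c * \1_(level n) w)%:E)%E.
Proof.
set x := xi 0 w; have x0 : 0 < x := xi0_pos w.
set K := Num.truncn (x / c).
have cK_le_x : c * K%:R <= x by rewrite mulrC -ler_pdivlMr // truncn_le divr_ge0 ?ltW.
have x_lt_cK1 : x < c * K.+1%:R by rewrite mulrC -ltr_pdivrMr // truncnS_gt.
have count_ge : ((c * K%:R)%:E <= \sum_(n <oo) (c * \1_(level n) w)%:E)%E.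
  apply: le_trans (nneseries_lim_ge (P := xpredT) K _) => [|n _ _]; last first.
    by rewrite lee_fin.
  rewrite big_mkord (eq_bigr (fun _ => c%:E)) => [|n _].
    by rewrite sumEFin sumr_const card_ord mulr_natr.
  rewrite indicE mem_set ?mulr1 // /level /= in_itv /= andbT -/x.
  by apply: le_trans cK_le_x; rewrite ler_pM2l // ler_nat.
apply: le_trans (leeD2l _ count_ge); rewrite -EFinD lee_fin.
apply: le_trans (powR_le1D x0 eta01) _.
by move: x_lt_cK1; rewrite -natr1 mulrDr mulr1; lra.
Qed.

Lemma threshold_series_pinfty :
    (\int[Q]_w ((xi 0 w) `^ eta)%:E = +oo)%E ->
  (\sum_(n <oo) Q (xi n @^-1` `[(c * n.+1%:R)%R, +oo[%classic) = +oo)%E.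
Proof.
move=> int_oo; case: xi_iid => mxi ident _.
rewrite (eq_eseriesr (fun n _ => ident n _ (measurable_itv _))) -/(level _).
set S := (\sum_(n <oo) Q (level n))%E.
have measurable_count : measurable_fun (T := Omega) (U := \bar R) setT
    (fun w => \sum_(n <oo) (c * \1_(level n) w)%:E)%E.
  apply: (ge0_emeasurable_sum (P := xpredT)) => [n w _ _|n _]; first by rewrite lee_fin.
  exact/measurable_EFinP/measurable_funM/measurable_indic.
have int_le : (\int[Q]_w ((xi 0 w) `^ eta)%:E <= (1 + c)%:E + c%:E * S)%E.
  apply: le_trans (ge0_le_integral _ measurableT _ _ _
    (fun w _ => powR_le_level_count w)) _ => [w _|||].
  - by rewrite lee_fin powR_ge0.
  - by apply/measurable_EFinP; apply: measurableT_comp (measurable_powR eta) (mxi 0).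
  - exact/emeasurable_funD/measurable_count.
  rewrite ge0_integralD //; first last.
  - by move=> w _; apply: nneseries_ge0 => n _ _; rewrite lee_fin.
  - by move=> w _; rewrite lee_fin addr_ge0 // ltW.
  rewrite integral_cst // [X in (_ * X)%E]probability_setT mule1 leeD2l //.
  rewrite integral_nneseries // => [|n|n w _]; last 2 first.
  - exact/measurable_EFinP/measurable_funM/measurable_indic.
  - by rewrite lee_fin.
  rewrite -nneseriesZl => [|n _]; last exact: measure_ge0.
  apply: lee_nneseries => n _; first by move=> _; apply: integral_ge0 => w _; rewrite lee_fin.
  rewrite (integralZl_indic (D := setT) measurableT (fun _ => level n)) //.
    by rewrite integral_indic // setIT.
  by move=> /(lt_trans c0); rewrite ltxx.
have S0 : (0 <= S)%E by apply: nneseries_ge0 => n _ _; exact: measure_ge0.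
apply: contrapT => S_not_oo.
have S_fin : S \is a fin_num by rewrite ge0_fin_numE // ltey; exact/eqP.
by move: int_le; rewrite int_oo leye_eq -(fineK S_fin) -EFinM -EFinD.
Qed.

End heavy_tail.

End iid_sequence.

Theorem theorem1p2 (R : realType) (d : measure_display) (Omega : measurableType d)
  (Q : probability Omega R) (xi : nat -> Omega -> R) :
  iid_seq Q xi ->
  (forall k w, 0 < xi k w) ->
  (exists eta : R, 0 < eta < 1 /\
     (\int[Q]_w ((xi 0%N w) `^ eta)%:E = +oo)%E) ->
  forall p : R, 0 <= p < 1 ->
  {ae Q, forall w,
     forall (dT : measure_display) (T : measurableType dT)
            (P : probability T R) (omega : edge -> T -> bool),
       bernoulli_edges P (fun e => p `^ edge_len (fun k => xi k w) e) omega ->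
       P (perc_event omega) = 0%E}.
Proof.
move=> xi_iid xi_pos [eta [/andP[eta0 eta1] int_oo]] p /andP[p0 p1].
have [p_eq0|p_neq0] := eqVneq p 0.
  apply: negligibleS (negligible_set0 Q) => w /= not_perc; apply: not_perc.
  by move=> dT T P omega omegaP; exact: perc_prob0_p0 omegaP p_eq0 (xi_pos^~ w).
have {p0 p_neq0} p01 : 0 < p < 1 by rewrite lt_neqAle eq_sym p_neq0 p0.
have eta01 : 0 <= eta <= 1 by rewrite !ltW.
have series_oo := threshold_series_pinfty xi_iid
  (long_edge_ratio_gt0 p01) eta01 (xi_pos 0%N) int_oo.
apply: negligibleS (iid_infinitely_often xi_iid (fun n => measurable_itv _) series_oo).
move=> w /= not_perc long_edges; apply: not_perc => dT T P omega omegaP.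
apply: perc_prob0_long_edges omegaP p01 _ => k.
by have [i ki] := long_edges k; rewrite /= in_itv /= andbT; exists i.
Qed.
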